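(* Let $\Omega$ be the closure of a bounded domain in $\mathbb{R}^d$ and let $X$ be a Banach space of functions on $\Omega$ with $C(\Omega)\subset X$ and $\|g\|_X\le C_X\|g\|_{C(\Omega)}$ for $g\in C(\Omega)$. Let $Y$ be a linear subspace of $C(\Omega)$ with norm $\|\cdot\|_Y$ such that $K:=U(Y)=\{g\in Y:\|g\|_Y\le1\}$ is a compact subset of $C(\Omega)$, and let $C_Y$ be such that $\|g\|_{C(\Omega)}\le C_Y$ for all $g\in K$. Let ${\bf x}=(x_1,\dots,x_m)\in\Omega^m$, $f\in K$, $w:=\lambda_{\bf x}(f)$, and assume $R(K_w)_X\neq0$. For $\mu>0$ define on $C(\Omega)$ $$\mathcal{L}_\mu(g):=\|\lambda_{\bf x}(g)-w\|+\mu\|g\|_Y .$$ Let $C>2$, and let $\mu>0$, $\delta>0$ satisfy $\delta\le\mu^2$ and $$C_X\varepsilon+2R(K(w,2\varepsilon))_X\le C\,R(K_w)_X,\qquad\varepsilon:=\mu\max(\mu+1,C_Y)$$ (this holds for all sufficiently small $\mu$). Let $\Sigma\subset C(\Omega)$ satisfy $\operatorname{dist}(K,\Sigma\cap K)_{C(\Omega)}<\delta$ and let $\hat f\in\mathop{\rm argmin}_{g\in\Sigma}\mathcal{L}_\mu(g)$ be any minimizer. Then $\|f-\hat f\|_X\le C\,R(K_w)_X$.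
   Context: Convention: $\|g\|_Y:=\infty$ if $g\notin Y$. $\lambda_{\bf x}(g):=(g(x_1),\dots,g(x_m))$; on $\mathbb{R}^m$, $\|v\|:=\big[\frac1m\sum_{j=1}^m|v_j|^2\big]^{1/2}$. For $A,B\subset C(\Omega)$, $\operatorname{dist}(A,B)_{C(\Omega)}:=\sup_{a\in A}\inf_{b\in B}\|a-b\|_{C(\Omega)}$. $K_{w'}:=\{h\in K:\lambda_{\bf x}(h)=w'\}$, $K(w,\varepsilon):=\bigcup_{w'\in\mathbb{R}^m,\ \|w'-w\|\le\varepsilon}K_{w'}$. For $S\subset X$, $R(S)_X:=\inf\{r:\ S\subset B(z,r)_X\text{ for some }z\in X\}$ (Chebyshev radius in $X$). *)

From HB Require Import structures.
From mathcomp Require Import all_boot all_order all_algebra.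
From mathcomp Require Import all_classical all_reals all_analysis.
From Stdlib Require List.
Export Order.TTheory GRing.Theory Num.Theory.
Export numFieldNormedType.Exports.
Set Implicit Arguments. Unset Strict Implicit. Unset Printing Implicit Defensive.
Local Open Scope classical_set_scope.
Local Open Scope ring_scope.

Section Defs.
Variables (R : realType) (d : nat).
Notation Fn := ('rV[R]_d -> R).

Definition contOn (Om : set 'rV[R]_d) (g : Fn) : Prop := {within Om, continuous g}.

Definition supC (Om : set 'rV[R]_d) (g : Fn) : R := sup [set `|g x| | x in Om].

Definition openC (Om : set 'rV[R]_d) (U : set Fn) : Prop :=
  forall g, contOn Om g -> U g ->
    exists2 r : R, 0 < r & forall h, contOn Om h ->
      supC Om (fun t => h t - g t) < r -> U h.

Definition compactC (Om : set 'rV[R]_d) (K : set Fn) : Prop :=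
  K `<=` contOn Om /\
  forall (I : Type) (U : I -> set Fn), (forall i, openC Om (U i)) ->
    (forall g, K g -> exists i, U i g) ->
    exists s : seq I, forall g, K g -> exists i, List.In i s /\ U i g.

Definition distC (Om : set 'rV[R]_d) (A B : set Fn) : \bar R :=
  ereal_sup [set ereal_inf [set (supC Om (fun t => a t - b t))%:E | b in B]
            | a in A].

(* Chebyshev radius of S in X, where C(Om) sits in X via iota *)
Definition chebR (X : normedModType R) (iota : Fn -> X) (S : set Fn) : \bar R :=
  ereal_inf [set r%:E | r in
    [set r : R | exists z : X, forall s, S s -> `|iota s - z| < r]].

Variable m : nat.

Definition lam (xs : 'I_m -> 'rV[R]_d) (g : Fn) : 'I_m -> R := fun j => g (xs j).

Definition enormm (v : 'I_m -> R) : R :=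
  Num.sqrt ((m%:R)^-1 * \sum_(j < m) `|v j| ^+ 2).

Definition Kw (K : set Fn) (xs : 'I_m -> 'rV[R]_d) (w' : 'I_m -> R) : set Fn :=
  [set h | K h /\ lam xs h = w'].

Definition Kwe (K : set Fn) (xs : 'I_m -> 'rV[R]_d) (w : 'I_m -> R) (e : R)
  : set Fn :=
  \bigcup_(w' in [set w' : 'I_m -> R | enormm (fun j => w' j - w j) <= e])
     Kw K xs w'.

Definition unitY (Ys : set Fn) (nY : Fn -> R) : set Fn :=
  [set g | Ys g /\ nY g <= 1].

(* L_mu(g), with ||g||_Y = +oo when g is not in Y *)
Definition Lmu (Ys : set Fn) (nY : Fn -> R) (xs : 'I_m -> 'rV[R]_d)
  (w : 'I_m -> R) (mu : R) (g : Fn) : \bar R :=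
  if `[< Ys g >] then (enormm (fun j => lam xs g j - w j) + mu * nY g)%:E
  else +oo%E.

End Defs.

From HB Require Import structures.
From mathcomp Require Import all_boot all_order all_algebra.
From mathcomp Require Import all_classical all_reals all_analysis.
From mathcomp Require Import ring lra.
Import Order.TTheory GRing.Theory Num.Theory.
Import numFieldNormedType.Exports.
Local Open Scope classical_set_scope.
Local Open Scope ring_scope.
Set Implicit Arguments. Unset Strict Implicit.

(* Compare the minimizer fhat with a competitor g in Sigma /\ K that is
   delta-close to f: L_mu(fhat) <= L_mu(g) <= delta + mu <= mu^2 + mu, so fhat
   fits the data w up to mu^2 + mu and ||fhat||_Y <= 1 + mu.  Dividing fhat by
   max(||fhat||_Y, 1) gives g' in K that is uniformly mu C_Y-close to fhat;
   hence g' and f both lie in K(w, 2 eps), and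
   ||f - fhat||_X <= ||f - g'||_X + ||g' - fhat||_X
                  <= 2 R(K(w, 2 eps))_X + C_X eps <= C R(K_w)_X. *)

Lemma compact_closure_of_bounded (R : realType) n (D : set 'rV[R]_n) :
  bounded_set D -> compact (closure D).
Proof.
move=> [M [_ DM]]; apply: bounded_closed_compact; last exact: closed_closure.
have DB : closure D `<=` closed_ball_ Num.Def.normr (0 : 'rV[R]_n) (M + 1).
  have /closure_id -> := @closed_closed_ball_ _ _ (0 : 'rV[R]_n) (M + 1).
  apply: closureS => x Dx.
  by rewrite /closed_ball_ /= sub0r normrN; apply: (DM (M + 1)); rewrite ?ltrDl.
exists (M + 1); split; first by rewrite realD ?real1 ?num_real.
move=> r ltMr x /DB; rewrite /closed_ball_ /= sub0r normrN => le_x.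
exact/(le_trans le_x)/ltW.
Qed.

Section sup_norm.
Variables (R : realType) (d : nat) (Om : set 'rV[R]_d).
Implicit Types (g : 'rV[R]_d -> R).

(* [sup] of a set that is not bounded above is a junk value, hence [compact Om]. *)
Lemma supC_ub g x : compact Om -> contOn Om g -> Om x -> `|g x| <= supC Om g.
Proof.
move=> cOm cg Ox; apply: ub_le_sup; last by exists x.
have [M [_ gM]] := compact_bounded (continuous_compact cg cOm).
by exists (M + 1) => _ [y Oy <-]; apply: (gM (M + 1)); rewrite ?ltrDl//; exists y.
Qed.

Lemma supC_le g B x0 : Om x0 -> (forall x, Om x -> `|g x| <= B) -> supC Om g <= B.
Proof.
move=> Ox0 gB; apply: ge_sup; first by exists `|g x0|, x0.
by move=> _ [x Ox <-]; exact: gB.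
Qed.

Lemma distC_lt_witness (A B : set ('rV[R]_d -> R)) a e :
  A a -> (distC Om A B < e%:E)%E ->
  exists2 b, B b & supC Om (fun t => a t - b t) < e.
Proof.
move=> Aa /(le_lt_trans (ereal_sup_ubound _)).
case/(_ _ (ex_intro2 _ _ a Aa erefl))/ereal_inf_lt => _ [b Bb <-].
by rewrite lte_fin; exists b.
Qed.

End sup_norm.

Lemma sqr_addr_le_weighted (R : realFieldType) (a b s : R) : 0 < s ->
  (a + b) ^+ 2 <= (1 + s) * a ^+ 2 + (1 + s^-1) * b ^+ 2.
Proof.
move=> s_gt0; rewrite -subr_ge0.
have -> : (1 + s) * a ^+ 2 + (1 + s^-1) * b ^+ 2 - (a + b) ^+ 2
    = s * (a - b / s) ^+ 2 by field; rewrite gt_eqF.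
by rewrite mulr_ge0 ?sqr_ge0 ?ltW.
Qed.

Section normalized_euclidean_norm.
Variables (R : realType) (m : nat).
Implicit Types (u v : 'I_m -> R).

Lemma enormm_ge0 v : 0 <= enormm v.
Proof. exact: sqrtr_ge0. Qed.

Lemma enormm_sqr v : enormm v ^+ 2 = m%:R^-1 * \sum_(j < m) `|v j| ^+ 2.
Proof.
by rewrite sqr_sqrtr // mulr_ge0 ?invr_ge0 ?ler0n ?sumr_ge0.
Qed.

Lemma enormm_le v B : 0 <= B -> (forall j, `|v j| <= B) -> enormm v <= B.
Proof.
move=> B_ge0 vB; have := enormm_ge0 v.
suff : enormm v ^+ 2 <= B ^+ 2 by nra.
rewrite enormm_sqr; have sum_le : \sum_(j < m) `|v j| ^+ 2 <= m%:R * B ^+ 2.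
  have -> : m%:R * B ^+ 2 = \sum_(j < m) B ^+ 2.
    by rewrite sumr_const card_ord mulr_natl.
  by apply: ler_sum => j _; rewrite lerXn2r ?nnegrE.
case: m v vB sum_le => [|n] v _ sum_le; first by rewrite invr0 mul0r sqr_ge0.
by rewrite ler_pdivrMl ?ltr0n.
Qed.

Lemma enormm_le_add u v e1 e2 : 0 < e1 -> 0 < e2 ->
  enormm u <= e1 -> enormm v <= e2 -> enormm (fun j => u j + v j) <= e1 + e2.
Proof.
move=> e1_gt0 e2_gt0 ue1 ve2; have := enormm_ge0 (fun j => u j + v j).
suff : enormm (fun j => u j + v j) ^+ 2 <= (e1 + e2) ^+ 2 by nra.
have [u_ge0 v_ge0] := (enormm_ge0 u, enormm_ge0 v).
have ue1' : enormm u ^+ 2 <= e1 ^+ 2 by nra.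
have ve2' : enormm v ^+ 2 <= e2 ^+ 2 by nra.
(* with s = e2 / e1 the weighted bound below is exactly (e1 + e2)^2 *)
pose s := e2 / e1; have s_gt0 : 0 < s by rewrite divr_gt0.
have -> : (e1 + e2) ^+ 2 = (1 + s) * e1 ^+ 2 + (1 + s^-1) * e2 ^+ 2.
  by rewrite /s; field; rewrite !gt_eqF.
apply: le_trans (lerD (ler_wpM2l _ ue1') (ler_wpM2l _ ve2')); last 2 first.
- by rewrite addr_ge0 ?ltW.
- by rewrite addr_ge0 ?invr_ge0 ?ltW.
rewrite !enormm_sqr mulrCA [X in _ + X]mulrCA -mulrDr.
apply: ler_wpM2l; first by rewrite invr_ge0 ler0n.
rewrite !mulr_sumr -big_split /=; apply: ler_sum => j _.
rewrite !real_normK ?num_real //; exact: sqr_addr_le_weighted.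
Qed.

End normalized_euclidean_norm.

Section embedding.
Variables (R : realType) (d : nat) (Om : set 'rV[R]_d).
Variables (X : normedModType R) (iota : ('rV[R]_d -> R) -> X).

Lemma chebR_diam (S : set ('rV[R]_d -> R)) s1 s2 :
  S s1 -> S s2 -> ((`|iota s1 - iota s2|)%:E <= 2%:E * chebR iota S)%E.
Proof.
move=> Ss1 Ss2; suff : ((`|iota s1 - iota s2| / 2)%:E <= chebR iota S)%E.
  by move/(lee_wpmul2l (lee0n 2)); rewrite -EFinM mulrC divfK ?pnatr_eq0.
apply: le_ereal_inf_tmp => _ [r [z zS] <-]; rewrite lee_fin.
have := ler_distD z (iota s1) (iota s2); rewrite (distrC z).
have := zS _ Ss1; have := zS _ Ss2; lra.
Qed.

Lemma embedding_const_ge0 (CX : R) x0 : Om x0 ->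
  (forall g, contOn Om g -> `|iota g| <= CX * supC Om g) -> 0 <= CX.
Proof.
move=> Ox0 iota_bnd.
have c1 : contOn Om (fun _ => 1) by apply: continuous_subspaceT; exact: cst_continuous.
have sup1 : supC Om (fun _ => 1) = 1.
  apply/le_anti/andP; split; first by apply: (supC_le Ox0) => x _; rewrite normr1.
  by apply: ub_le_sup; [exists 1 => _ [x _ <-]; rewrite normr1 | exists x0; rewrite ?normr1].
by have := iota_bnd _ c1; rewrite sup1 mulr1; apply: le_trans.
Qed.

Hypothesis iota_lin : forall (a : R) g h, contOn Om g -> contOn Om h ->
  iota (fun t => a * g t + h t) = a *: iota g + iota h.

Lemma iotaB g h : contOn Om g -> contOn Om h ->
  iota (fun t => g t - h t) = iota g - iota h.
Proof.
move=> cg ch; have -> : (fun t => g t - h t) = (fun t => -1 * h t + g t).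
  by apply/funext => t; rewrite mulN1r addrC.
by rewrite iota_lin // scaleN1r addrC.
Qed.

End embedding.

Section normed_subspace.
Variables (R : realType) (d : nat) (Om : set 'rV[R]_d).
Local Notation Fn := ('rV[R]_d -> R).
Variables (Ys : set Fn) (nY : Fn -> R).
Hypothesis Ys0 : Ys (fun _ => 0).
Hypothesis Ys_lin : forall (a : R) g h, Ys g -> Ys h -> Ys (fun t => a * g t + h t).
Hypothesis Ys_ext : forall g h, Ys g -> (forall t, Om t -> g t = h t) -> Ys h.
Hypothesis nY_ge0 : forall g, Ys g -> 0 <= nY g.
Hypothesis nY_scale : forall (a : R) g, Ys g -> nY (fun t => a * g t) = `|a| * nY g.

Lemma Ys_scale a g : Ys g -> Ys (fun t => a * g t).
Proof.
move=> Yg; apply: (Ys_ext (Ys_lin a Yg Ys0)) => t _; exact: addr0.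
Qed.

Lemma Ys_sub g h : Ys g -> Ys h -> Ys (fun t => g t - h t).
Proof.
move=> Yg Yh; apply: (Ys_ext (Ys_lin (-1) Yh Yg)) => t _.
by rewrite mulN1r addrC.
Qed.

Definition normalizeY (h : Fn) : Fn := fun t => (Num.max (nY h) 1)^-1 * h t.

Lemma unitY_normalizeY h : Ys h -> unitY Ys nY (normalizeY h).
Proof.
move=> Yh; have max_gt0 : 0 < Num.max (nY h) 1 by rewrite lt_max ltr01 orbT.
split; first exact: Ys_scale.
rewrite nY_scale // ger0_norm ?invr_ge0 ?(ltW max_gt0) // ler_pdivrMl // mulr1.
by rewrite le_max lexx.
Qed.

Lemma normalizeY_dist h c t : 0 <= c -> nY h <= 1 + c ->
  `|normalizeY h t - h t| <= c * `|normalizeY h t|.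
Proof.
move=> c_ge0 hc; set s := Num.max (nY h) 1.
have s_ge1 : 1 <= s by rewrite le_max lexx orbT.
have -> : h t = s * normalizeY h t.
  by rewrite /normalizeY mulrA divff ?mul1r // gt_eqF // (lt_le_trans ltr01).
rewrite -{1}[normalizeY h t]mul1r -mulrBl normrM distrC.
rewrite [`|s - 1|]ger0_norm ?subr_ge0 //.
apply: ler_wpM2r; first exact: normr_ge0.
by rewrite lerBlDl /s ge_max hc lerDl c_ge0.
Qed.

Variables (m : nat) (xs : 'I_m -> 'rV[R]_d) (w : 'I_m -> R) (mu : R).

Lemma Lmu_unitY_le g e : 0 <= mu -> 0 <= e -> unitY Ys nY g ->
  (forall j, `|g (xs j) - w j| <= e) -> (Lmu Ys nY xs w mu g <= (e + mu)%:E)%E.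
Proof.
move=> mu_ge0 e_ge0 [Yg gY1] ge; rewrite /Lmu asboolT // lee_fin.
by apply: lerD; [exact: enormm_le | rewrite ler_piMr].
Qed.

Lemma Lmu_le_fin g r : (Lmu Ys nY xs w mu g <= r%:E)%E ->
  Ys g /\ enormm (fun j => lam xs g j - w j) + mu * nY g <= r.
Proof. by rewrite /Lmu; case: asboolP. Qed.

Lemma Lmu_minimizer_fit g h delta : 0 < mu -> 0 <= delta -> delta <= mu ^+ 2 ->
  unitY Ys nY g -> (forall j, `|g (xs j) - w j| <= delta) ->
  (Lmu Ys nY xs w mu h <= Lmu Ys nY xs w mu g)%E ->
  Ys h /\ enormm (fun j => lam xs h j - w j) + mu * nY h <= mu ^+ 2 + mu.
Proof.
move=> mu_gt0 delta_ge0 delta_le Kg g_fit Lhg.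
have Lg := Lmu_unitY_le (ltW mu_gt0) delta_ge0 Kg g_fit.
have [Yh h_fit] := Lmu_le_fin (le_trans Lhg Lg).
by split=> //; lra.
Qed.

Lemma Kwe_center (K : set Fn) f e : K f -> 0 <= e -> Kwe K xs (lam xs f) e f.
Proof.
move=> Kf e_ge0; exists (lam xs f) => //=.
by apply: enormm_le => // j; rewrite subrr normr0.
Qed.

Variable CY : R.
Hypothesis Ys_cont : Ys `<=` contOn Om.
Hypothesis unitY_bnd : forall g, unitY Ys nY g -> supC Om g <= CY.
Hypothesis Om_compact : compact Om.

Section near_fit.
Local Notation eps := (mu * Num.max (mu + 1) CY).
Variable h : Fn.
Hypothesis Yh : Ys h.

Lemma normalizeY_close t : 0 < mu ->
  enormm (fun j => lam xs h j - w j) + mu * nY h <= mu ^+ 2 + mu ->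
  Om t -> `|normalizeY h t - h t| <= eps.
Proof.
move=> mu_gt0 h_fit Ot; have fit_ge0 := enormm_ge0 (fun j => lam xs h j - w j).
have hY : nY h <= 1 + mu.
  by rewrite -(ler_pM2l mu_gt0) mulrDr mulr1 -expr2; lra.
apply: le_trans (normalizeY_dist _ (ltW mu_gt0) hY) _; rewrite ler_pM2l //.
apply: (le_trans _ (_ : CY <= Num.max (mu + 1) CY)); last by rewrite le_max lexx orbT.
have := unitY_bnd (unitY_normalizeY Yh); apply: le_trans.
by apply: supC_ub => //; apply/Ys_cont/Ys_scale.
Qed.

Lemma normalizeY_in_Kwe : 0 < mu ->
  enormm (fun j => lam xs h j - w j) + mu * nY h <= mu ^+ 2 + mu ->
  (forall j, Om (xs j)) -> Kwe (unitY Ys nY) xs w (2 * eps) (normalizeY h).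
Proof.
move=> mu_gt0 h_fit xsOm.
exists (lam xs (normalizeY h)); last exact: (conj (unitY_normalizeY Yh) erefl).
have max_mu : mu + 1 <= Num.max (mu + 1) CY by rewrite le_max lexx.
have eps_gt0 : 0 < eps by apply: mulr_gt0 => //; apply: lt_le_trans max_mu; lra.
have fit_ge0 := enormm_ge0 (fun j => lam xs h j - w j).
rewrite /= (_ : 2 * eps = eps + eps); last lra.
have -> : (fun j => lam xs (normalizeY h) j - w j) = (fun j =>
    (lam xs h j - w j) + (lam xs (normalizeY h) j - lam xs h j)).
  by apply/funext => j; ring.
apply: enormm_le_add => //; first by have := nY_ge0 Yh; nra.
apply: enormm_le (ltW eps_gt0) _ => j; exact: normalizeY_close.
Qed.

Variables (X : normedModType R) (iota : Fn -> X) (CX : R) (x0 : 'rV[R]_d).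
Hypothesis iota_lin : forall (a : R) g h, contOn Om g -> contOn Om h ->
  iota (fun t => a * g t + h t) = a *: iota g + iota h.
Hypothesis iota_bnd : forall g, contOn Om g -> `|iota g| <= CX * supC Om g.
Hypothesis Om_x0 : Om x0.

Lemma normalizeY_iota_close : 0 < mu ->
  enormm (fun j => lam xs h j - w j) + mu * nY h <= mu ^+ 2 + mu ->
  `|iota (normalizeY h) - iota h| <= CX * eps.
Proof.
move=> mu_gt0 h_fit; have Yg := Ys_scale (Num.max (nY h) 1)^-1 Yh.
rewrite -(iotaB iota_lin (Ys_cont Yg) (Ys_cont Yh)).
apply: le_trans (iota_bnd (Ys_cont (Ys_sub Yg Yh))) _.
apply/(ler_wpM2l (embedding_const_ge0 Om_x0 iota_bnd))/(supC_le Om_x0) => t Ot.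
exact: normalizeY_close.
Qed.

End near_fit.

End normed_subspace.

Unset Implicit Arguments.

Theorem theorem4p4 (R : realType) (d m : nat)
  (D Om : set 'rV[R]_d)
  (X : completeNormedModType R) (iota : ('rV[R]_d -> R) -> X) (CX : R)
  (Ys : set ('rV[R]_d -> R)) (nY : ('rV[R]_d -> R) -> R) (CY : R)
  (xs : 'I_m -> 'rV[R]_d) (f : 'rV[R]_d -> R)
  (mu delta C : R) (Sigma : set ('rV[R]_d -> R)) (fhat : 'rV[R]_d -> R) :
  (* Om is the closure of a bounded domain *)
  open D -> connected D -> bounded_set D -> D !=set0 -> Om = closure D ->
  (* C(Om) is (linearly, injectively) contained in the Banach space X *)
  (forall (a : R) g h, contOn Om g -> contOn Om h ->
      iota (fun t => a * g t + h t) = a *: iota g + iota h) ->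
  (forall g, contOn Om g -> iota g = 0 -> forall t, Om t -> g t = 0) ->
  (forall g, contOn Om g -> `|iota g| <= CX * supC Om g) ->
  (* Y is a linear subspace of C(Om) with a norm *)
  Ys `<=` contOn Om ->
  Ys (fun _ => 0) ->
  (forall (a : R) g h, Ys g -> Ys h -> Ys (fun t => a * g t + h t)) ->
  (forall g h, Ys g -> (forall t, Om t -> g t = h t) -> Ys h) ->
  (forall g, Ys g -> 0 <= nY g) ->
  (forall g, Ys g -> nY g = 0 <-> forall t, Om t -> g t = 0) ->
  (forall (a : R) g, Ys g -> nY (fun t => a * g t) = `|a| * nY g) ->
  (forall g h, Ys g -> Ys h -> nY (fun t => g t + h t) <= nY g + nY h) ->
  (* K = U(Y) is compact in C(Om), bounded by CY *)
  compactC Om (unitY Ys nY) ->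
  (forall g, unitY Ys nY g -> supC Om g <= CY) ->
  (* data *)
  (forall j, Om (xs j)) ->
  unitY Ys nY f ->
  (chebR iota (Kw (unitY Ys nY) xs (lam xs f)) != 0)%E ->
  2 < C -> 0 < mu -> 0 < delta -> delta <= mu ^+ 2 ->
  ((CX * (mu * Num.max (mu + 1) CY))%R%:E
     + 2%:E * chebR iota (Kwe (unitY Ys nY) xs (lam xs f)
                            (2 * (mu * Num.max (mu + 1) CY))%R)
   <= C%:E * chebR iota (Kw (unitY Ys nY) xs (lam xs f)))%E ->
  Sigma `<=` contOn Om ->
  (distC Om (unitY Ys nY) (Sigma `&` unitY Ys nY) < delta%:E)%E ->
  Sigma fhat ->
  (forall g, Sigma g ->
     (Lmu Ys nY xs (lam xs f) mu fhat <= Lmu Ys nY xs (lam xs f) mu g)%E) ->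
  ((`|iota (fun t => f t - fhat t)|)%:E
     <= C%:E * chebR iota (Kw (unitY Ys nY) xs (lam xs f)))%E.
Proof.
move=> _ _ bD [x0 Dx0] eOm iota_lin _ iota_bnd Ys_cont Ys0 Ys_lin Ys_ext nY_ge0 _
  nY_scale _ _ unitY_bnd xsOm Kf _ _ mu_gt0 delta_gt0 delta_le Hcheb _ Hdist
  Sfhat fhat_min.
set K := unitY Ys nY; set w := lam xs f; set eps := mu * Num.max (mu + 1) CY.
have Ox0 : Om x0 by rewrite eOm; exact: subset_closure.
have cOm : compact Om by rewrite eOm; exact: compact_closure_of_bounded.
have [[Yf _] [g [Sg Kg] fg]] := (Kf, distC_lt_witness Kf Hdist).
have g_fit j : `|g (xs j) - w j| <= delta.
  rewrite distrC; apply/ltW/(le_lt_trans _ fg).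
  apply: (supC_ub (g := fun t => f t - g t)) => //.
  by case: Kg => Yg _; apply/Ys_cont/(Ys_sub Ys_lin Ys_ext).
have [Yfhat fhat_fit] := Lmu_minimizer_fit mu_gt0 (ltW delta_gt0) delta_le Kg g_fit
  (fhat_min _ Sg).
have eps_ge0 : 0 <= eps.
  by rewrite mulr_ge0 ?(ltW mu_gt0) // le_max; apply/orP; left; lra.
have Kwe_f : Kwe K xs w (2 * eps)%R f by apply: Kwe_center => //; rewrite mulr_ge0.
have Kwe_g' := normalizeY_in_Kwe Ys0 Ys_lin Ys_ext nY_ge0 nY_scale Ys_cont
  unitY_bnd cOm Yfhat mu_gt0 fhat_fit xsOm.
have g'_fhat := normalizeY_iota_close Ys0 Ys_lin Ys_ext nY_scale Ys_cont
  unitY_bnd cOm Yfhat iota_lin iota_bnd Ox0 mu_gt0 fhat_fit.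
rewrite (iotaB iota_lin (Ys_cont _ Yf) (Ys_cont _ Yfhat)).
apply: le_trans Hcheb; rewrite addeC.
have := ler_distD (iota (normalizeY nY fhat)) (iota f) (iota fhat).
rewrite -lee_fin EFinD => /le_trans; apply.
by apply: leeD; [exact: chebR_diam | rewrite lee_fin].
Qed.
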